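(* Let $\mathfrak p=(p,q)\in\mathbb Z_+^2$ and $\Gamma=\Gamma_{\mathfrak p}$. Then $\bigcup_{j=1}^{pq}B_j^\Gamma=[-4,4]$ and $\max B_j^\Gamma\ge\min B_{j+1}^\Gamma$ for every $1\le j<pq$.
   Context: For $r\ge3$ and $\theta\in\mathbb R$, $\Delta_\theta^r\in\mathbb C^{r\times r}$ is the Hermitian matrix with $1$ on the sub- and superdiagonals, $0$ on the diagonal, entry $e^{-i\theta}$ in position $(1,r)$ and $e^{i\theta}$ in position $(r,1)$, all other entries $0$; $\Delta_\theta^1=2\cos\theta$, $\Delta_\theta^2=\begin{bmatrix}0&1+e^{-i\theta}\\1+e^{i\theta}&0\end{bmatrix}$. $\Gamma_{\mathfrak p}=([0,p)\times[0,q))\cap\mathbb Z^2$, $\Delta^{\Gamma}_{\theta,\varphi}=\Delta_\theta^p\otimes I_q+I_p\otimes\Delta_\varphi^q$, with ordered eigenvalues $\lambda_1^\Gamma(\theta,\varphi)\le\cdots\le\lambda_{pq}^\Gamma(\theta,\varphi)$ and bands $B_j^\Gamma=\{\lambda_j^\Gamma(\theta,\varphi):(\theta,\varphi)\in[0,\pi]^2\}$. *)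

From HB Require Import structures.
From Stdlib Require Import Reals Lra ClassicalEpsilon FunctionalExtensionality.
From mathcomp Require Import all_boot all_order all_algebra.

Set Implicit Arguments.
Unset Strict Implicit.
Unset Printing Implicit Defensive.

Record C := mkC { Cre : R ; Cim : R }.

Definition C_eqb (x y : C) : bool :=
  if excluded_middle_informative (x = y) then true else false.

Lemma C_eqP : Equality.axiom C_eqb.
Proof.
move=> x y; rewrite /C_eqb; case: excluded_middle_informative => h.
  by apply: ReflectT.
by apply: ReflectF.
Qed.

HB.instance Definition _ := hasDecEq.Build C C_eqP.

Definition C_find (P : pred C) (n : nat) : option C :=
  match excluded_middle_informative (exists x, P x) with
  | left h => Some (proj1_sig (constructive_indefinite_description _ h))
  | right _ => None
  end.

Lemma C_find_correct P n x : C_find P n = Some x -> P x.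
Proof.
rewrite /C_find; case: excluded_middle_informative => // h [<-].
exact: proj2_sig (constructive_indefinite_description _ h).
Qed.

Lemma C_find_complete (P : pred C) : (exists x, P x) -> exists n, C_find P n.
Proof.
move=> h; exists 0%N; rewrite /C_find.
by case: excluded_middle_informative.
Qed.

Lemma C_find_ext (P Q : pred C) : P =1 Q -> C_find P =1 C_find Q.
Proof.
by move=> /functional_extensionality ->.
Qed.

HB.instance Definition _ :=
  hasChoice.Build C C_find_correct C_find_complete C_find_ext.

Definition C0 : C := mkC (IZR 0) (IZR 0).
Definition C1 : C := mkC (IZR 1) (IZR 0).
Definition Cadd (x y : C) : C := mkC (Rplus (Cre x) (Cre y)) (Rplus (Cim x) (Cim y)).
Definition Copp (x : C) : C := mkC (Ropp (Cre x)) (Ropp (Cim x)).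
Definition Cmul (x y : C) : C :=
  mkC (Rminus (Rmult (Cre x) (Cre y)) (Rmult (Cim x) (Cim y)))
      (Rplus (Rmult (Cre x) (Cim y)) (Rmult (Cim x) (Cre y))).

Lemma Cext (x y : C) : Cre x = Cre y -> Cim x = Cim y -> x = y.
Proof. by case: x; case: y => ? ? ? ? /= -> ->. Qed.

Lemma CaddA : associative Cadd.
Proof. move=> x y z; apply: Cext => /=; ring. Qed.
Lemma CaddC : commutative Cadd.
Proof. move=> x y; apply: Cext => /=; ring. Qed.
Lemma Cadd0 : left_id C0 Cadd.
Proof. move=> x; apply: Cext => /=; ring. Qed.
Lemma CaddN : left_inverse C0 Copp Cadd.
Proof. move=> x; apply: Cext => /=; ring. Qed.

HB.instance Definition _ := GRing.isZmodule.Build C CaddA CaddC Cadd0 CaddN.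

Lemma CmulA : associative Cmul.
Proof. move=> x y z; apply: Cext => /=; ring. Qed.
Lemma CmulC : commutative Cmul.
Proof. move=> x y; apply: Cext => /=; ring. Qed.
Lemma Cmul1 : left_id C1 Cmul.
Proof. move=> x; apply: Cext => /=; ring. Qed.
Lemma CmulDl : left_distributive Cmul Cadd.
Proof. move=> x y z; apply: Cext => /=; ring. Qed.
Lemma C1_neq0 : C1 != C0.
Proof.
apply/eqP => h; have := f_equal Cre h; rewrite /= => h'; lra.
Qed.

HB.instance Definition _ :=
  GRing.Zmodule_isComNzRing.Build C CmulA CmulC Cmul1 CmulDl C1_neq0.

Definition RtoC (x : R) : C := mkC x (IZR 0).
Definition expi (t : R) : C := mkC (cos t) (sin t).

Local Open Scope ring_scope.

(* Delta_theta^r (0-indexed): 1 on the sub-/superdiagonal, e^{-i theta} at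
   (0, r-1) and e^{i theta} at (r-1, 0), entries being ADDED.  For r >= 3 this
   is exactly the paper's matrix; for r = 2 it gives
   [[0, 1 + e^{-i theta}], [1 + e^{i theta}, 0]], and for r = 1 it gives
   e^{-i theta} + e^{i theta} = 2 cos theta, matching the paper's special cases. *)
Definition Delta (r : nat) (theta : R) : 'M[C]_r :=
  \matrix_(i < r, j < r)
    ((if (i == j.+1 :> nat) || (j == i.+1 :> nat) then 1 else 0)
     + (if (i == 0%N :> nat) && (j == r.-1 :> nat) then expi (Ropp theta) else 0)
     + (if (i == r.-1 :> nat) && (j == 0%N :> nat) then expi theta else 0)).

(* Kronecker product with the standard index ordering k = a * q + b. *)
Lemma kron_div_lt_nat p q k : (k < p * q)%N -> (k %/ q < p)%N.
Proof.
case: q => [|q] hk; first by move: hk; rewrite muln0.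
by rewrite ltn_divLR.
Qed.

Lemma kron_mod_lt_nat p q k : (k < p * q)%N -> (k %% q < q)%N.
Proof.
case: q => [|q] hk; first by move: hk; rewrite muln0.
by rewrite ltn_mod.
Qed.

Lemma kron_div_lt p q (k : 'I_(p * q)) : (k %/ q < p)%N.
Proof. exact: kron_div_lt_nat (ltn_ord k). Qed.

Lemma kron_mod_lt p q (k : 'I_(p * q)) : (k %% q < q)%N.
Proof. exact: kron_mod_lt_nat (ltn_ord k). Qed.

Definition kron_fst p q (k : 'I_(p * q)) : 'I_p := Ordinal (kron_div_lt k).
Definition kron_snd p q (k : 'I_(p * q)) : 'I_q := Ordinal (kron_mod_lt k).

Definition kronmx p q (A : 'M[C]_p) (B : 'M[C]_q) : 'M[C]_(p * q) :=
  \matrix_(i, j) (A (kron_fst i) (kron_fst j) * B (kron_snd i) (kron_snd j)).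

Definition DeltaG (p q : nat) (theta phi : R) : 'M[C]_(p * q) :=
  kronmx (Delta p theta) 1%:M + kronmx 1%:M (Delta q phi).

Definition ordered_eigs n (A : 'M[C]_n) (l : 'I_n -> R) : Prop :=
  (forall i j : 'I_n, (i <= j)%N -> Rle (l i) (l j)) /\
  char_poly A = \prod_(i < n) ('X - (RtoC (l i))%:P).

(* The band B_j^Gamma (j 0-indexed): values of lambda_j over [0,pi]^2. *)
Definition band (p q : nat) (j : 'I_(p * q)) (x : R) : Prop :=
  exists theta phi : R,
    Rle 0 theta /\ Rle theta PI /\ Rle 0 phi /\ Rle phi PI /\
    exists l : 'I_(p * q) -> R,
      ordered_eigs (DeltaG p q theta phi) l /\ l j = x.

Definition is_max_of (S : R -> Prop) (M : R) : Prop :=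
  S M /\ forall x, S x -> Rle x M.
Definition is_min_of (S : R -> Prop) (m : R) : Prop :=
  S m /\ forall x, S x -> Rle m x.

Arguments band : clear implicits.
Arguments DeltaG : clear implicits.

(* Δ_θ^r is diagonalised by the Vandermonde vectors (z^m)_m, z ranging over the
   r-th roots of e^{iθ}, with eigenvalues 2 cos((θ + 2πk)/r); hence Δ^Γ_{θ,φ}
   has eigenvalues 2 cos((θ + 2πk)/p) + 2 cos((φ + 2πl)/q). Every angle in
   [0, π] is such a (θ + 2πk)/r up to reflection, so the bands cover [-4, 4].
   Sorting is 1-Lipschitz for the sup norm, so each λ_j is 2-Lipschitz on
   [0, π]², and every band attains its maximum and minimum. If max B_j < min
   B_{j+1}, a point strictly between them is in no band: λ_i ≤ λ_j for i ≤ j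
   and λ_i ≥ λ_{j+1} for i > j. *)

From Stdlib Require Import Reals Lra ClassicalEpsilon.
From HB Require Import structures.
From mathcomp Require Import all_boot all_order all_algebra.
From mathcomp Require Import Rstruct zify.
Set Implicit Arguments. Unset Strict Implicit. Unset Printing Implicit Defensive.
Import Order.TTheory GRing.Theory Num.Theory.

Definition Cinv (x : C) : C :=
  mkC (Rdiv (Cre x) (Rplus (Rmult (Cre x) (Cre x)) (Rmult (Cim x) (Cim x))))
      (Rdiv (Ropp (Cim x)) (Rplus (Rmult (Cre x) (Cre x)) (Rmult (Cim x) (Cim x)))).

Lemma Cnorm2_neq0 (x : C) : x != 0%R ->
  Rplus (Rmult (Cre x) (Cre x)) (Rmult (Cim x) (Cim x)) <> IZR 0.
Proof.
move=> /eqP hx h; apply: hx; case: x h => a b /= h.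
have ha : a = IZR 0 by nra.
have hb : b = IZR 0 by nra.
by rewrite ha hb.
Qed.

Lemma CmulVf (x : C) : x != 0%R -> (Cinv x * x)%R = 1%R.
Proof. by move=> /Cnorm2_neq0 h; apply: Cext; rewrite /= /Rdiv; field. Qed.

Lemma Cinv0 : Cinv 0%R = 0%R.
Proof. by apply: Cext; rewrite /= /Rdiv; ring. Qed.

HB.instance Definition _ := GRing.ComNzRing_isField.Build C CmulVf Cinv0.

Section Expi.

Local Open Scope R_scope.

Lemma expiD a b : (expi a * expi b)%R = expi (a + b).
Proof. by apply: Cext; rewrite /= ?cos_plus ?sin_plus; ring. Qed.

Lemma expi0 : expi 0 = 1%R.
Proof. by apply: Cext; rewrite /= ?cos_0 ?sin_0. Qed.

Lemma expiX a (n : nat) : (expi a ^+ n)%R = expi (INR n * a).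
Proof.
elim: n => [|n IH]; first by rewrite expr0 /= Rmult_0_l expi0.
by rewrite exprS IH expiD S_INR; congr expi; ring.
Qed.

Lemma expiNl a : (expi (- a) * expi a)%R = 1%R.
Proof. by rewrite expiD Rplus_opp_l expi0. Qed.

Lemma expi_add_2kPI a (k : nat) : expi (a + 2 * INR k * PI) = expi a.
Proof. by apply: Cext; rewrite /= ?cos_period ?sin_period. Qed.

Lemma expiDexpiN a : (expi a + expi (- a))%R = RtoC (2 * cos a).
Proof. by apply: Cext; rewrite /= ?cos_neg ?sin_neg; ring. Qed.

Lemma RtoCD x y : RtoC (x + y) = (RtoC x + RtoC y)%R.
Proof. by apply: Cext => /=; ring. Qed.

Lemma RtoC_inj : injective RtoC.
Proof. by move=> x y [ ]. Qed.

Lemma expi_neq a b : 0 < b - a < 2 * PI -> expi a <> expi b.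
Proof.
move=> [h1 h2] he.
have hc : cos a = cos b by move: (f_equal Cre he).
have hs : sin a = sin b by move: (f_equal Cim he).
have hsin : sin (b - a) = 0 by rewrite sin_minus hc hs; ring.
have hcos : cos (b - a) = 1.
  by rewrite cos_minus hc hs; have := sin2_cos2 b; rewrite /Rsqr; lra.
have [h|[h|h]] := sin_eq_O_2PI_0 (b - a) (Rlt_le _ _ h1) (Rlt_le _ _ h2) hsin.
- lra.
- by rewrite h cos_PI in hcos; lra.
- lra.
Qed.

End Expi.

(** * Diagonalisation of Delta *)

Section DeltaEigen.

Local Open Scope R_scope.

(* The k-th r-th root of e^{it} is e^{i root_angle r t k}. *)
Definition root_angle (r : nat) (t : R) (k : nat) : R := (t + 2 * INR k * PI) / INR r.

Definition Delta_eig (r : nat) (t : R) (k : nat) : R := 2 * cos (root_angle r t k).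

Lemma root_angle_lt r t (i j : nat) : (i < j < r)%N ->
  0 < root_angle r t j - root_angle r t i < 2 * PI.
Proof.
move=> /andP [hij hjr].
have hr : 0 < INR r by apply: lt_0_INR; lia.
have h1 : INR i < INR j by apply: lt_INR; lia.
have h2 : INR j < INR r by apply: lt_INR; lia.
have h0 : 0 <= INR i by apply: pos_INR.
have E : root_angle r t j - root_angle r t i = 2 * PI * ((INR j - INR i) / INR r).
  by rewrite /root_angle; field; lra.
rewrite E; have := PI_RGT_0 => hpi.
have h3 : 0 < (INR j - INR i) / INR r by apply: Rdiv_lt_0_compat; lra.
have h4 : (INR j - INR i) / INR r < 1.
  by apply/(Rmult_lt_reg_r (INR r)) => //; rewrite /Rdiv Rmult_assoc Rinv_l; lra.
split; nra.
Qed.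

Lemma expi_root_angleX r t k : (0 < r)%N ->
  (expi (root_angle r t k) ^+ r)%R = expi t.
Proof.
move=> hr; have hr' : INR r <> 0 by apply: not_0_INR; case: r hr.
rewrite expiX -(expi_add_2kPI t k) /root_angle; congr expi; field; exact: hr'.
Qed.

Lemma expi_Nroot_angleX r t k : (0 < r)%N ->
  (expi (- root_angle r t k) ^+ r)%R = expi (- t).
Proof.
move=> hr; have hr' : INR r <> 0 by apply: not_0_INR; case: r hr.
rewrite expiX /root_angle (_ : INR r * _ = - t - 2 * INR k * PI); last by field.
by rewrite -(expi_add_2kPI (- t - 2 * INR k * PI) k); congr expi; ring.
Qed.

Local Open Scope ring_scope.

Definition Delta_eigvecs r t : 'M[C]_r :=
  \matrix_(m < r, k < r) expi (root_angle r t k) ^+ m.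

Definition Delta_eigvals r t : 'M[C]_r := diag_mx (\row_(k < r) RtoC (Delta_eig r t k)).

Lemma Delta_eigvecs_unit r t : Delta_eigvecs r t \in unitmx.
Proof.
have -> : Delta_eigvecs r t = Vandermonde r (\row_(k < r) expi (root_angle r t k)).
  by apply/matrixP => i j; rewrite !mxE.
rewrite unitmxE det_Vandermonde unitfE.
apply/prodf_neq0 => i _; apply/prodf_neq0 => j hij.
rewrite !mxE subr_eq0; apply/eqP => /esym.
by apply: expi_neq; apply: root_angle_lt; rewrite hij /=.
Qed.

Lemma sum_indicator r (a : nat) (c : C) (v : nat -> C) :
  \sum_(j < r) (if (j : nat) == a then c else 0) * v j =
  if (a < r)%N then c * v a else 0.
Proof.
case: ltnP => ha.
  rewrite (bigD1 (Ordinal ha)) //= eqxx big1 ?addr0 // => j hj.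
  case: eqP => [hja|_]; last by rewrite mul0r.
  by case/eqP: hj; apply: val_inj.
rewrite big1 // => j _; case: eqP => [hja|]; last by rewrite mul0r.
by move: (ltn_ord j); rewrite hja ltnNge ha.
Qed.

Lemma Delta_entry r t (m j : 'I_r) : Delta r t m j =
    (if (j : nat) == m.-1 then (if (0 < m)%N then 1 else 0) else 0)
  + (if (j : nat) == m.+1 then 1 else 0)
  + (if (j : nat) == r.-1 then (if (m : nat) == 0%N then expi (- t) else 0) else 0)
  + (if (j : nat) == 0%N then (if (m : nat) == r.-1 then expi t else 0) else 0).
Proof.
rewrite mxE; congr (_ + _ + _); last 2 first.
- by case: ((m : nat) == 0%N); case: ((j : nat) == r.-1).
- by case: ((m : nat) == r.-1); case: ((j : nat) == 0%N).
case: m => [[|m] hm] /=; case: j => j hj /=.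
  by case: (j == 0%N); case: (j == 1%N); rewrite /= ?add0r ?addr0.
rewrite eqSS (eq_sym m j); case: (eqVneq j m) => [->|h] /=; last by rewrite add0r.
by rewrite (_ : (m == m.+2) = false) ?addr0 //; apply/eqP; lia.
Qed.

Lemma Delta_row_sum r t (m : 'I_r) (v : nat -> C) :
  \sum_(j < r) Delta r t m j * v j =
    (if (0 < m)%N then v m.-1 else expi (- t) * v r.-1)
  + (if (m.+1 < r)%N then v m.+1 else expi t * v 0%N).
Proof.
under eq_bigr => j _ do rewrite Delta_entry !mulrDl.
rewrite !big_split /= !sum_indicator.
have hm := ltn_ord m; have hr : (0 < r)%N by apply: leq_ltn_trans hm.
have -> : (m.-1 < r)%N by apply: leq_ltn_trans (leq_pred _) hm.
rewrite prednK // leqnn hr.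
have [->|mpos] := posnP m; rewrite /= ?mul0r ?add0r ?mul1r.
  case: ltnP => h1.
    by rewrite (_ : (0%N == r.-1) = false) ?mul0r ?addr0 ?mul1r 1?addrC //; apply/eqP; lia.
  by rewrite (_ : (0%N == r.-1) = true) ?add0r //; apply/eqP; lia.
case: ltnP => h1.
  by rewrite (_ : ((m : nat) == r.-1) = false) ?mul0r ?addr0 ?mul1r //; apply/eqP; lia.
by rewrite (_ : ((m : nat) == r.-1) = true) ?addr0 //; apply/eqP; lia.
Qed.

Lemma Delta_eigvecsP r t :
  Delta r t *m Delta_eigvecs r t = Delta_eigvecs r t *m Delta_eigvals r t.
Proof.
apply/matrixP => m k.
rewrite mul_mx_diag mxE [LHS]mxE.
under eq_bigr => j _ do rewrite [Delta_eigvecs r t j k]mxE.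
rewrite Delta_row_sum !mxE /Delta_eig -expiDexpiN.
have hr : (0 < r)%N by apply: leq_ltn_trans (ltn_ord m).
set z := expi (root_angle r t k); set b := expi (- root_angle r t k).
have bz : b * z = 1 by exact: expiNl.
have zr : z ^+ r = expi t by exact: expi_root_angleX.
have br : b ^+ r = expi (- t) by exact: expi_Nroot_angleX.
have -> : (if (0 < m)%N then z ^+ m.-1 else expi (- t) * z ^+ r.-1) = b * z ^+ m.
  have [->|mpos] := posnP m; last by rewrite -(prednK mpos) exprS mulrA bz mul1r.
  rewrite expr0 mulr1 -br (_ : b ^+ r = b * b ^+ r.-1); last by rewrite -exprS prednK.
  by rewrite -mulrA -exprMn bz expr1n mulr1.
have -> : (if (m.+1 < r)%N then z ^+ m.+1 else expi t * z ^+ 0) = z ^+ m * z.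
  case: ltnP => h1; first by rewrite exprSr.
  by rewrite expr0 mulr1 -zr -exprSr; congr (_ ^+ _); have := ltn_ord m; lia.
by rewrite mulrDr addrC [b * _]mulrC.
Qed.

End DeltaEigen.

Section Kronecker.

Local Open Scope ring_scope.

Lemma kron_ord_inj p q (i j : 'I_(p * q)) :
  kron_fst i = kron_fst j -> kron_snd i = kron_snd j -> i = j.
Proof.
move=> [h1] [h2]; apply: val_inj => /=.
by rewrite (divn_eq i q) (divn_eq j q) h1 h2.
Qed.

Lemma kron_pair_lt p q (a : 'I_p) (b : 'I_q) : (a * q + b < p * q)%N.
Proof.
have ha := ltn_ord a; have hb := ltn_ord b.
have : (a.+1 * q <= p * q)%N by apply: leq_mul.
by rewrite mulSn; lia.
Qed.

Definition kron_pair p q (a : 'I_p) (b : 'I_q) : 'I_(p * q) :=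
  Ordinal (kron_pair_lt a b).

Lemma kron_fst_pair p q (a : 'I_p) (b : 'I_q) : kron_fst (kron_pair a b) = a.
Proof.
apply: val_inj => /=; have hq : (0 < q)%N by apply: leq_ltn_trans (ltn_ord b).
by rewrite divnMDl // divn_small ?addn0.
Qed.

Lemma kron_snd_pair p q (a : 'I_p) (b : 'I_q) : kron_snd (kron_pair a b) = b.
Proof. by apply: val_inj => /=; rewrite modnMDl modn_small. Qed.

Lemma kron_pairK p q (k : 'I_(p * q)) : kron_pair (kron_fst k) (kron_snd k) = k.
Proof. by apply: kron_ord_inj; rewrite ?kron_fst_pair ?kron_snd_pair. Qed.

Lemma sum_kron p q (F : 'I_(p * q) -> C) :
  \sum_(k < p * q) F k = \sum_(a < p) \sum_(b < q) F (kron_pair a b).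
Proof.
rewrite pair_big (reindex (fun k : 'I_(p * q) => (kron_fst k, kron_snd k))) /=.
  by apply: eq_bigr => k _; rewrite kron_pairK.
exists (fun ab : 'I_p * 'I_q => kron_pair ab.1 ab.2) => [k _|[a b] _] /=.
  exact: kron_pairK.
by rewrite kron_fst_pair kron_snd_pair.
Qed.

Lemma kronmx_mul p q (A A' : 'M[C]_p) (B B' : 'M[C]_q) :
  kronmx A B *m kronmx A' B' = kronmx (A *m A') (B *m B').
Proof.
apply/matrixP => i j; rewrite !mxE big_distrlr /= sum_kron.
apply: eq_bigr => a _; apply: eq_bigr => b _.
by rewrite !mxE kron_fst_pair kron_snd_pair mulrACA.
Qed.

Lemma kronmx_diag p q (d : 'rV[C]_p) (e : 'rV[C]_q) :
  kronmx (diag_mx d) (diag_mx e) =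
  diag_mx (\row_k (d 0 (kron_fst k) * e 0 (kron_snd k))).
Proof.
apply/matrixP => i j; rewrite !mxE.
case: (eqVneq i j) => [->|hij]; first by rewrite !eqxx !mulr1n.
rewrite mulr0n; case: (eqVneq (kron_fst i) (kron_fst j)) => [h1|]; last by rewrite mulr0n mul0r.
case: (eqVneq (kron_snd i) (kron_snd j)) => [h2|]; last by rewrite mulr0n mulr0.
by case/eqP: hij; apply: kron_ord_inj.
Qed.

Lemma kronmx1 p q : kronmx (1%:M : 'M[C]_p) (1%:M : 'M[C]_q) = 1%:M.
Proof.
rewrite -[1%:M : 'M[C]_p]diag_const_mx -[1%:M : 'M[C]_q]diag_const_mx kronmx_diag.
by rewrite -diag_const_mx; congr diag_mx; apply/matrixP => i j; rewrite !mxE mulr1.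
Qed.

Lemma kronmx_unit p q (A : 'M[C]_p) (B : 'M[C]_q) :
  A \in unitmx -> B \in unitmx -> kronmx A B \in unitmx.
Proof.
move=> hA hB.
have : kronmx A B *m kronmx (invmx A) (invmx B) = 1%:M.
  by rewrite kronmx_mul !mulmxV // kronmx1.
by case/mulmx1_unit.
Qed.

End Kronecker.

Section DeltaGEigen.

Local Open Scope ring_scope.

Lemma char_poly_similar n (A D F : 'M[C]_n) :
  F \in unitmx -> A *m F = F *m D -> char_poly A = char_poly D.
Proof.
move=> Fu AF.
set Fx := map_mx (@polyC C) F; set Gx := map_mx (@polyC C) (invmx F).
have FG : Fx *m Gx = 1%:M by rewrite -map_mxM mulmxV // map_mx1.
have key : char_poly_mx A *m Fx = Fx *m char_poly_mx D.
  by rewrite /char_poly_mx mulmxBl mulmxBr -map_mxM AF map_mxM scalar_mxC.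
have : \det (char_poly_mx A) * \det Fx * \det Gx =
       \det Fx * \det (char_poly_mx D) * \det Gx by rewrite -!det_mulmx key.
by rewrite -mulrA -det_mulmx FG det1 mulr1 [RHS]mulrAC -det_mulmx FG det1 mul1r.
Qed.

Definition DeltaG_eig p q t f (k : 'I_(p * q)) : R :=
  Rplus (Delta_eig p t (kron_fst k)) (Delta_eig q f (kron_snd k)).

Lemma char_poly_DeltaG p q t f :
  char_poly (DeltaG p q t f) = \prod_(k < p * q) ('X - (RtoC (DeltaG_eig t f k))%:P).
Proof.
set E : 'M[C]_(p * q) := diag_mx (\row_k RtoC (DeltaG_eig t f k)).
have -> : \prod_(k < p * q) ('X - (RtoC (DeltaG_eig t f k))%:P) = char_poly E.
  rewrite char_poly_trig ?diag_mx_is_trig //.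
  by apply: eq_bigr => k _; rewrite !mxE eqxx mulr1n.
have hE : E = kronmx (Delta_eigvals p t) 1%:M + kronmx 1%:M (Delta_eigvals q f).
  rewrite -!diag_const_mx !kronmx_diag -raddfD; congr diag_mx.
  by apply/matrixP => i j; rewrite !mxE mulr1 mul1r RtoCD.
apply: (char_poly_similar (kronmx_unit (Delta_eigvecs_unit p t) (Delta_eigvecs_unit q f))).
by rewrite hE /DeltaG mulmxDl mulmxDr !kronmx_mul !Delta_eigvecsP !mul1mx !mulmx1.
Qed.

End DeltaGEigen.

(** * Order statistics *)

Section OrderStat.

Local Open Scope ring_scope.

Definition sorted_vals n (f : 'I_n -> R) : seq R := sort <=%R [seq f i | i <- enum 'I_n].

(* The j-th smallest value of f, counting from 0 and with multiplicity. *)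
Definition order_stat n (f : 'I_n -> R) (j : nat) : R := nth 0 (sorted_vals f) j.

Lemma size_sorted_vals n (f : 'I_n -> R) : size (sorted_vals f) = n.
Proof. by rewrite size_sort size_map size_enum_ord. Qed.

Lemma perm_sorted_vals n (f : 'I_n -> R) :
  perm_eq (sorted_vals f) [seq f i | i <- enum 'I_n].
Proof. by rewrite /sorted_vals perm_sort. Qed.

Lemma sorted_sorted_vals n (f : 'I_n -> R) : sorted <=%R (sorted_vals f).
Proof. exact/sort_sorted/le_total. Qed.

Lemma order_stat_le n (f : 'I_n -> R) (i j : nat) : (i <= j)%N -> (j < n)%N ->
  order_stat f i <= order_stat f j.
Proof.
move=> hij hj; apply: (sorted_leq_nth le_trans lexx) => //.
- exact: sorted_sorted_vals.
- by rewrite inE size_sorted_vals; apply: leq_ltn_trans hj.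
- by rewrite inE size_sorted_vals.
Qed.

Lemma order_stat_mem n (f : 'I_n -> R) (j : 'I_n) : exists k, order_stat f j = f k.
Proof.
have : order_stat f j \in sorted_vals f by rewrite mem_nth // size_sorted_vals.
by rewrite (perm_mem (perm_sorted_vals f)) => /mapP [k _ ->]; exists k.
Qed.

Lemma order_stat_index n (f : 'I_n -> R) (k : 'I_n) :
  exists j : 'I_n, order_stat f j = f k.
Proof.
have hin : f k \in sorted_vals f.
  by rewrite (perm_mem (perm_sorted_vals _)); apply/mapP; exists k; rewrite ?mem_enum.
have hj : (index (f k) (sorted_vals f) < n)%N.
  by rewrite -[X in (_ < X)%N](size_sorted_vals f) index_mem.
by exists (Ordinal hj); rewrite /order_stat nth_index.
Qed.

Lemma nth_map_enum_ord n (T : Type) (x0 : T) (g : 'I_n -> T) (i : nat) (hi : (i < n)%N) :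
  nth x0 [seq g k | k <- enum 'I_n] i = g (Ordinal hi).
Proof.
rewrite (nth_map (Ordinal hi)) ?size_enum_ord //.
by rewrite (nth_ord_enum (Ordinal hi) (Ordinal hi)).
Qed.

Lemma ordered_eigs_order_stat n (A : 'M[C]_n) (f : 'I_n -> R) :
  char_poly A = \prod_(i < n) ('X - (RtoC (f i))%:P) ->
  ordered_eigs A (fun i => order_stat f i).
Proof.
move=> hA; split=> [i j hij|]; first exact/RleP/order_stat_le.
rewrite hA -[RHS](big_mkord xpredT (fun i => 'X - (RtoC (order_stat f i))%:P)).
have -> : \prod_(0 <= i < n) ('X - (RtoC (order_stat f i))%:P) =
          \prod_(x <- sorted_vals f) ('X - (RtoC x)%:P).
  by rewrite [RHS](big_nth 0) size_sorted_vals.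
by rewrite (perm_big _ (perm_sorted_vals f)) big_map big_enum.
Qed.

Lemma ordered_eigsE n (A : 'M[C]_n) (f l : 'I_n -> R) :
  char_poly A = \prod_(i < n) ('X - (RtoC (f i))%:P) ->
  ordered_eigs A l -> forall j : 'I_n, l j = order_stat f j.
Proof.
move=> hA [hl hlA] j.
have hperm : perm_eq [seq l k | k <- enum 'I_n] [seq f k | k <- enum 'I_n].
  apply: (perm_map_inj RtoC_inj); apply: prod_XsubC_eq.
  by rewrite !big_map; exact: etrans (esym hlA) hA.
have hs : sorted <=%R [seq l k | k <- enum 'I_n].
  apply/(sortedP 0) => i; rewrite size_map size_enum_ord => hi.
  rewrite (nth_map_enum_ord _ _ hi) (nth_map_enum_ord _ _ (ltnW hi)).
  exact/RleP/hl.
have hsort : [seq l k | k <- enum 'I_n] = sorted_vals f.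
  rewrite /sorted_vals -(sorted_sort le_trans hs).
  exact/(perm_sortP le_total le_trans le_anti).
rewrite /order_stat -hsort (nth_map_enum_ord _ _ (ltn_ord j)).
by congr l; apply: val_inj.
Qed.

End OrderStat.

Lemma bandE p q (j : 'I_(p * q)) x :
  band p q j x <->
  exists t f, Rle 0 t /\ Rle t PI /\ Rle 0 f /\ Rle f PI /\
    order_stat (@DeltaG_eig p q t f) j = x.
Proof.
split.
  move=> [t [f [h1 [h2 [h3 [h4 [l [hl <-]]]]]]]].
  exists t, f; do 4! split => //.
  by rewrite (ordered_eigsE (char_poly_DeltaG p q t f) hl).
move=> [t [f [h1 [h2 [h3 [h4 hx]]]]]].
exists t, f; do 4! split => //.
exists (fun i => order_stat (@DeltaG_eig p q t f) i); split => //.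
exact: ordered_eigs_order_stat (char_poly_DeltaG p q t f).
Qed.

(** * The bands cover [-4, 4] *)

Section Cover.

Local Open Scope R_scope.

Lemma mod_2PI_decomposition (N : nat) (s : R) : 0 <= s < 2 * PI * (INR N + 1) ->
  exists k : nat, (k <= N)%N /\ exists u, 0 <= u < 2 * PI /\ s = u + 2 * INR k * PI.
Proof.
have hpi := PI_RGT_0.
elim: N s => [|N IH] s [h1 h2].
  by exists 0%N; split => //; exists s; split; [simpl in h2; lra | simpl; ring].
case: (Rlt_le_dec s (2 * PI)) => hs.
  by exists 0%N; split => //; exists s; split; [lra | simpl; ring].
have h2' : s - 2 * PI < 2 * PI * (INR N + 1) by rewrite S_INR in h2; lra.
have [k [hk [u [hu hsu]]]] := IH (s - 2 * PI) (conj (ltac:(lra) : 0 <= s - 2 * PI) h2').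
by exists k.+1; split => //; exists u; split => //; rewrite S_INR; lra.
Qed.

(* Reflecting u to 2 PI - u and k to r - 1 - k when u > PI keeps the angle in [0, PI]. *)
Lemma cos_root_angle_onto (r : nat) (a : R) : (0 < r)%N -> 0 <= a <= PI ->
  exists t (k : nat), 0 <= t <= PI /\ (k < r)%N /\ cos (root_angle r t k) = cos a.
Proof.
move=> hr [ha1 ha2].
have hpi := PI_RGT_0.
have hR : 0 < INR r by apply: lt_0_INR; lia.
have hR1 : 1 <= INR r by apply: (le_INR 1); lia.
have hs : 0 <= INR r * a < 2 * PI * (INR r + 1) by split; nra.
have [k [hk [u [hu hsu]]]] := mod_2PI_decomposition hs.
have hk2 : (2 * k <= r)%N.
  apply/ssrnat.leP; apply: INR_le; rewrite mult_INR /=.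
  apply: (Rmult_le_reg_r PI) => //; nra.
have hsa : a = (u + 2 * INR k * PI) / INR r by rewrite -hsu; field; lra.
case: (Rle_lt_dec u PI) => hu2.
  by exists u, k; split; [lra | split; [lia | rewrite hsa]].
exists (2 * PI - u), (r - k.+1)%N; split; first lra.
split; first lia.
have hI : INR (r - k.+1) = INR r - INR k - 1.
  rewrite minus_INR ?S_INR; first ring.
  by apply/ssrnat.leP; lia.
rewrite hsa (_ : root_angle r _ _ = 2 * PI - (u + 2 * INR k * PI) / INR r).
  by rewrite cos_minus cos_2PI sin_2PI; ring.
by rewrite /root_angle hI; field; lra.
Qed.

Lemma DeltaG_eig_bound p q t f (k : 'I_(p * q)) : -4 <= DeltaG_eig t f k <= 4.
Proof.
rewrite /DeltaG_eig /Delta_eig.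
have := COS_bound (root_angle p t (kron_fst k)).
have := COS_bound (root_angle q f (kron_snd k)).
lra.
Qed.

Lemma bands_cover p q (hp : (0 < p)%N) (hq : (0 < q)%N) (x : R) :
  (exists j : 'I_(p * q), band p q j x) <-> (-4 <= x /\ x <= 4).
Proof.
split.
  move=> [j /bandE [t [f [_ [_ [_ [_ <-]]]]]]].
  have [k ->] := order_stat_mem (@DeltaG_eig p q t f) j.
  exact: DeltaG_eig_bound.
move=> hx.
set a := acos (x / 4).
have ha : 0 <= a <= PI by apply: acos_bound.
have hca : cos a = x / 4 by apply: cos_acos; lra.
have [t [k1 [ht [hk1 hc1]]]] := cos_root_angle_onto hp ha.
have [f [k2 [hf [hk2 hc2]]]] := cos_root_angle_onto hq ha.
have [j hj] := order_stat_index (@DeltaG_eig p q t f) (kron_pair (Ordinal hk1) (Ordinal hk2)).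
exists j; apply/bandE; exists t, f; do 4! (split; first lra).
rewrite hj /DeltaG_eig kron_fst_pair kron_snd_pair /Delta_eig /= hc1 hc2 hca.
by field.
Qed.

End Cover.

(** * Continuity of the sorted eigenvalues *)

Section OrderStatLipschitz.

Local Open Scope ring_scope.

Lemma count_le_nth_sorted (s : seq R) (j : nat) : sorted <=%R s -> (j < size s)%N ->
  (j.+1 <= count (fun x : R => (x <= nth 0 s j)%R) s)%N.
Proof.
move=> hs hj.
rewrite -[s in count _ s](cat_take_drop j.+1 s) count_cat.
apply: leq_trans (leq_addr _ _).
have hsz : size (take j.+1 s) = j.+1 by rewrite size_takel.
have : all (fun x : R => (x <= nth 0 s j)%R) (take j.+1 s).
  apply/allP => x /(nthP 0) [i hi <-].
  rewrite hsz in hi; rewrite nth_take //.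
  by apply: (sorted_leq_nth le_trans lexx) => //; rewrite inE //; apply: leq_ltn_trans hj.
by rewrite all_count => /eqP ->; rewrite hsz.
Qed.

Lemma count_le_sorted_lt_nth (s : seq R) (j : nat) (a : R) : sorted <=%R s ->
  (j < size s)%N -> a < nth 0 s j -> (count (fun x : R => (x <= a)%R) s <= j)%N.
Proof.
move=> hs hj ha.
rewrite -(cat_take_drop j s) count_cat.
have -> : count (fun x : R => (x <= a)%R) (drop j s) = 0%N.
  apply/eqP; rewrite -leqn0 leqNgt -has_count; apply/hasPn => x /(nthP 0) [i hi <-].
  rewrite nth_drop -ltNge; apply: (lt_le_trans ha).
  rewrite size_drop in hi.
  apply: (sorted_leq_nth le_trans lexx) => //; rewrite ?inE ?leq_addr //.
  by rewrite -ltn_subRL.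
by rewrite addn0; apply: leq_trans (count_size _ _) _; rewrite size_take hj.
Qed.

(* Counting the values below a threshold compares order statistics of f and g. *)
Lemma order_stat_le_shift n (f g : 'I_n -> R) (d : R) (j : nat) : (j < n)%N ->
  (forall k, f k <= g k + d) -> order_stat f j <= order_stat g j + d.
Proof.
move=> hj hfg; rewrite leNgt; apply/negP => hlt.
have hg : (j.+1 <= count (fun x : R => (x <= order_stat g j)%R) (sorted_vals g))%N.
  by apply: count_le_nth_sorted; rewrite ?sorted_sorted_vals ?size_sorted_vals.
have hf : (count (fun x : R => (x <= order_stat g j + d)%R) (sorted_vals f) <= j)%N.
  by apply: count_le_sorted_lt_nth; rewrite ?sorted_sorted_vals ?size_sorted_vals.
have : (count (fun x : R => (x <= order_stat g j)%R) (sorted_vals g) <=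
        count (fun x : R => (x <= order_stat g j + d)%R) (sorted_vals f))%N.
  rewrite (permP (perm_sorted_vals g)) (permP (perm_sorted_vals f)) !count_map.
  by apply: sub_count => k /= hk; apply: le_trans (hfg k) _; rewrite lerD2r.
lia.
Qed.

Lemma order_stat_lipschitz n (f g : 'I_n -> R) (d : R) (j : nat) : (j < n)%N ->
  (forall k, Rle (Rabs (Rminus (f k) (g k))) d) ->
  Rle (Rabs (Rminus (order_stat f j) (order_stat g j))) d.
Proof.
move=> hj h.
have hfg k : Rle (Rminus (f k) (g k)) d /\ Rle (Rminus (g k) (f k)) d.
  have := h k; have := Rle_abs (Rminus (f k) (g k)).
  by have := Rle_abs (Rminus (g k) (f k)); rewrite Rabs_minus_sym; lra.
have h1 : order_stat f j <= order_stat g j + d.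
  apply: order_stat_le_shift => // k; have := hfg k.
  by move=> hk; apply/RleP; rewrite /GRing.add /=; lra.
have h2 : order_stat g j <= order_stat f j + d.
  apply: order_stat_le_shift => // k; have := hfg k.
  by move=> hk; apply/RleP; rewrite /GRing.add /=; lra.
move/RleP: h1; move/RleP: h2; rewrite /GRing.add /= => h2 h1.
by apply: Rabs_le; lra.
Qed.

End OrderStatLipschitz.

Section Extrema.

Local Open Scope R_scope.

Lemma cos_lipschitz x y : Rabs (cos x - cos y) <= Rabs (x - y).
Proof.
have [c [hc _]] := MVT_abs cos (fun c => - sin c) y x (fun c _ => derivable_pt_lim_cos c).
rewrite hc Rabs_Ropp; have := SIN_bound c => hs.
have h : Rabs (sin c) <= 1 by apply: Rabs_le; lra.
by have := Rabs_pos (x - y); nra.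
Qed.

Lemma lipschitz_continuity_pt (g : R -> R) (L : R) : 0 <= L ->
  (forall x y, Rabs (g x - g y) <= L * Rabs (x - y)) -> forall x, continuity_pt g x.
Proof.
move=> hL hg x eps heps.
have hd : 0 < eps / (L + 1) by apply: Rdiv_lt_0_compat; lra.
exists (eps / (L + 1)); split => // y [_ hy]; rewrite /= /Rdist in hy.
apply: (Rle_lt_trans _ _ _ (hg y x)).
have h1 : L * Rabs (y - x) <= L * (eps / (L + 1)) by apply: Rmult_le_compat_l; lra.
have he : (L + 1) * (eps / (L + 1)) = eps by field; lra.
nra.
Qed.

Definition Lipschitz2 (L : R) (F : R -> R -> R) :=
  forall t f t' f', Rabs (F t f - F t' f') <= L * (Rabs (t - t') + Rabs (f - f')).

Section Rectangle.

Variables (a b c d L : R) (F : R -> R -> R).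
Hypotheses (hab : a <= b) (hcd : c <= d) (hL : 0 <= L) (hF : Lipschitz2 L F).

(* Maximise first in the second variable: t |-> max_f F t f is again L-Lipschitz. *)
Lemma Lipschitz2_attains_max :
  exists t0 f0, a <= t0 <= b /\ c <= f0 <= d /\
    forall t f, a <= t <= b -> c <= f <= d -> F t f <= F t0 f0.
Proof.
have hex t : exists m, (forall f, c <= f <= d -> F t f <= F t m) /\ c <= m <= d.
  apply: continuity_ab_maj => // f _; apply: (lipschitz_continuity_pt hL) => x y.
  by have := hF t x t y; rewrite Rminus_diag Rabs_R0 Rplus_0_l.
pose phi t := proj1_sig (constructive_indefinite_description _ (hex t)).
have hphi t : (forall f, c <= f <= d -> F t f <= F t (phi t)) /\ c <= phi t <= d.
  by rewrite /phi; case: constructive_indefinite_description.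
pose G t := F t (phi t).
have hG t t' : G t <= G t' + L * Rabs (t - t').
  have := hF t (phi t) t' (phi t); rewrite Rminus_diag Rabs_R0 Rplus_0_r.
  have := proj1 (hphi t') (phi t) (proj2 (hphi t)).
  by have := Rle_abs (F t (phi t) - F t' (phi t)); rewrite /G; lra.
have hGc x : continuity_pt G x.
  apply: (lipschitz_continuity_pt hL) => {}x y; apply: Rabs_le.
  by have := hG x y; have := hG y x; rewrite (Rabs_minus_sym y x); lra.
have [t0 [ht0 hb0]] := continuity_ab_maj G a b hab (fun x _ => hGc x).
exists t0, (phi t0); split => //; split; first exact: proj2 (hphi t0).
move=> t f ht hf.
by have := proj1 (hphi t) f hf; have := ht0 t ht; rewrite /G; lra.
Qed.

End Rectangle.

Lemma Lipschitz2_attains_min (a b c d L : R) (F : R -> R -> R) :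
  a <= b -> c <= d -> 0 <= L -> Lipschitz2 L F ->
  exists t0 f0, a <= t0 <= b /\ c <= f0 <= d /\
    forall t f, a <= t <= b -> c <= f <= d -> F t0 f0 <= F t f.
Proof.
move=> hab hcd hL hF.
have hF' : Lipschitz2 L (fun t f => - F t f).
  move=> t f t' f'; rewrite (_ : - F t f - - F t' f' = - (F t f - F t' f')); last ring.
  by rewrite Rabs_Ropp.
have [t0 [f0 [h1 [h2 h3]]]] := Lipschitz2_attains_max hab hcd hL hF'.
by exists t0, f0; do 2! split => //; move=> t f ht hf; have := h3 t f ht hf; lra.
Qed.

Lemma root_angle_lipschitz r t t' (k : nat) : (0 < r)%N ->
  Rabs (root_angle r t k - root_angle r t' k) <= Rabs (t - t').
Proof.
move=> hr.
have hR : 1 <= INR r by apply: (le_INR 1); lia.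
have hi : 0 < / INR r <= 1.
  by split; [apply: Rinv_0_lt_compat | rewrite -Rinv_1; apply: Rinv_le_contravar]; lra.
rewrite (_ : _ - _ = (t - t') * / INR r); last by rewrite /root_angle; field; lra.
rewrite Rabs_mult (Rabs_right (/ INR r)); last lra.
by have := Rabs_pos (t - t'); nra.
Qed.

Lemma order_stat_DeltaG_lipschitz p q (hp : (0 < p)%N) (hq : (0 < q)%N) (j : 'I_(p * q)) :
  Lipschitz2 2 (fun t f => order_stat (@DeltaG_eig p q t f) j).
Proof.
move=> t f t' f'; apply: order_stat_lipschitz => [|k]; first exact: ltn_ord.
rewrite /DeltaG_eig /Delta_eig.
set A := root_angle p t _; set A' := root_angle p t' _.
set B := root_angle q f _; set B' := root_angle q f' _.
rewrite (_ : _ - _ = 2 * (cos A - cos A') + 2 * (cos B - cos B')); last ring.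
apply: Rle_trans (Rabs_triang _ _) _.
rewrite !Rabs_mult (Rabs_right 2); last lra.
have := Rle_trans _ _ _ (cos_lipschitz A A') (root_angle_lipschitz t t' _ hp).
have := Rle_trans _ _ _ (cos_lipschitz B B') (root_angle_lipschitz f f' _ hq).
lra.
Qed.

End Extrema.

(** * Overlap of consecutive bands *)

Section Bands.

Variables (p q : nat).
Hypotheses (hp : (0 < p)%N) (hq : (0 < q)%N).

Lemma band_has_max (j : 'I_(p * q)) : exists M, is_max_of (band p q j) M.
Proof.
have [t [f [ht [hf hmax]]]] := Lipschitz2_attains_max
  (Rlt_le _ _ PI_RGT_0) (Rlt_le _ _ PI_RGT_0) (ltac:(lra) : Rle 0 2)
  (order_stat_DeltaG_lipschitz hp hq j).
exists (order_stat (@DeltaG_eig p q t f) j); split.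
  by apply/bandE; exists t, f; case: ht; case: hf.
by move=> x /bandE [t' [f' [? [? [? [? <-]]]]]]; apply: hmax.
Qed.

Lemma band_has_min (j : 'I_(p * q)) : exists m, is_min_of (band p q j) m.
Proof.
have [t [f [ht [hf hmin]]]] := Lipschitz2_attains_min
  (Rlt_le _ _ PI_RGT_0) (Rlt_le _ _ PI_RGT_0) (ltac:(lra) : Rle 0 2)
  (order_stat_DeltaG_lipschitz hp hq j).
exists (order_stat (@DeltaG_eig p q t f) j); split.
  by apply/bandE; exists t, f; case: ht; case: hf.
by move=> x /bandE [t' [f' [? [? [? [? <-]]]]]]; apply: hmin.
Qed.

Lemma band_le_max (i j : 'I_(p * q)) (M x : R) : (i <= j)%N ->
  is_max_of (band p q j) M -> band p q i x -> Rle x M.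
Proof.
move=> hij [_ hM] /bandE [t [f [h1 [h2 [h3 [h4 <-]]]]]].
apply: Rle_trans (hM _ _); last by apply/bandE; exists t, f.
exact/RleP/order_stat_le.
Qed.

Lemma band_ge_min (i j : 'I_(p * q)) (m x : R) : (j <= i)%N ->
  is_min_of (band p q j) m -> band p q i x -> Rle m x.
Proof.
move=> hji [_ hm] /bandE [t [f [h1 [h2 [h3 [h4 <-]]]]]].
apply: Rle_trans (hm _ _) _; first by apply/bandE; exists t, f.
exact/RleP/order_stat_le.
Qed.

End Bands.

Theorem mainTheorem12 (p q : nat) (hp : (0 < p)%N) (hq : (0 < q)%N) :
  (forall x : R,
     (exists j : 'I_(p * q), band p q j x) <-> (Rle (-4) x /\ Rle x 4)) /\
  (forall j k : 'I_(p * q), nat_of_ord k = (nat_of_ord j).+1 ->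
     exists M m : R,
       is_max_of (band p q j) M /\ is_min_of (band p q k) m /\ Rle m M).
Proof.
split; first exact: bands_cover.
move=> j k hjk.
have [M hM] := band_has_max hp hq j.
have [m hm] := band_has_min hp hq k.
exists M, m; do 2! split => //.
apply: Rnot_lt_le => hMm.
have hM4 := proj1 (bands_cover hp hq M) (ex_intro _ j (proj1 hM)).
have hm4 := proj1 (bands_cover hp hq m) (ex_intro _ k (proj1 hm)).
have [i hi] := proj2 (bands_cover hp hq ((M + m) / 2)) (ltac:(lra)).
case: (leqP i j) => hij.
  by have := band_le_max hij hM hi; lra.
have hki : (k <= i)%N by rewrite hjk.
by have := band_ge_min hki hm hi; lra.
Qed.
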